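(* Let $G$ be a connected graph of order $n\ge 2$. Then $F_c(G)=n-1$ if and only if $G$ is the complete graph $K_n$ (with $n\ge 2$) or the star $K_{1,n-1}$ with $n\ge 4$.
   Context: Forcing process: given a set of initially colored vertices, at each step a colored vertex with exactly one non-colored neighbor forces (colors) that neighbor. A set $S\subseteq V(G)$ is a forcing set if iterating this process from $S$ eventually colors all vertices; it is a connected forcing set if moreover the induced subgraph $G[S]$ is connected. $F_c(G)$, the connected forcing number, is the minimum cardinality of a connected forcing set of $G$. *)

From mathcomp Require Import all_boot.
Set Implicit Arguments. Unset Strict Implicit. Unset Printing Implicit Defensive.

Section Forcing.
Variables (T : finType) (e : rel T).

Definition simple_graph : Prop := symmetric e /\ irreflexive e.

Definition connected_graph : Prop := forall x y : T, connect e x y.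

Definition force_step (S : {set T}) : {set T} :=
  S :|: [set w | (w \notin S) &&
          [exists u in S, e u w &&
             [forall y, (e u y && (y \notin S)) ==> (y == w)]]].

(* The final colored set obtained by iterating the forcing process
   (it stabilises after at most #|T| rounds). *)
Definition closure (S : {set T}) : {set T} := iter #|T| force_step S.

Definition forcing_set (S : {set T}) : bool := closure S == [set: T].

Definition induced_connected (S : {set T}) : bool :=
  [forall x in S, forall y in S,
     connect [rel a b | [&& e a b, a \in S & b \in S]] x y].

Definition connected_forcing_set (S : {set T}) : bool :=
  forcing_set S && induced_connected S.

(* F_c(G): minimum cardinality of a connected forcing set
   (the default #|T| is attained by [set: T] for connected G). *)
Definition Fc : nat :=
  \big[minn/#|T|]_(S : {set T} | connected_forcing_set S) #|S|.

Definition is_complete : Prop := forall x y : T, x != y -> e x y.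

Definition is_star : Prop :=
  exists c : T, forall x y : T, e x y = (x != y) && ((x == c) || (y == c)).

End Forcing.

From Pilot Require Import Defs.
From mathcomp Require Import all_boot order zify.
Set Implicit Arguments. Unset Strict Implicit. Unset Printing Implicit Defensive.

(* Every connected graph has a non-cut vertex (one farthest from a root), and
   the other n - 1 vertices form a connected forcing set.
   The complement of {a, b} is a connected forcing set of size n - 2 as soon as
   G - {a, b} is connected and some other vertex u is adjacent to a but not to
   b: u forces a, after which b is the only uncolored vertex.  Such a, b, u
   exist unless G is complete or a star with n >= 4.  If no vertex dominates,
   take a non-cut vertex a, a neighbor u of a, and b farthest from u in G - a;
   as u does not dominate, b is not adjacent to u.  If r dominates, G - {a, b}
   is connected whenever a, b <> r, and a non-edge xy of G - r yields a, b, u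
   unless G - r is edgeless, i.e. G is a star (for n = 3, take a = r).
   Conversely, in K_n, and in K_{1,n-1} for sets containing the center, every
   colored vertex sees all or none of the uncolored ones, so a set missing two
   vertices is stuck; a connected set avoiding the center is a single leaf,
   which only forces the center. *)

Section Graph.
Variables (T : finType) (e : rel T).
Hypotheses (esym : symmetric e) (eirr : irreflexive e).
Implicit Types (S X : {set T}) (a b r u w x y z : T).

Lemma edge_neq x y : e x y -> x != y.
Proof. by apply: contraTneq => ->; rewrite eirr. Qed.

Definition induced (S : {set T}) : rel T := [rel x y | [&& e x y, x \in S & y \in S]].

Lemma induced_connect_sym S : connect_sym (induced S).
Proof.
apply: sym_connect_sym => x y; rewrite /induced /= esym.
by case: (x \in S); case: (y \in S); rewrite ?andbF.
Qed.

Lemma induced_connected_connect S x y :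
  induced_connected e S -> x \in S -> y \in S -> connect (induced S) x y.
Proof. by move=> /forallP/(_ x)/implyP S_conn /S_conn/forallP/(_ y)/implyP. Qed.

Lemma induced_connected_from S r :
  r \in S -> {in S, forall x, connect (induced S) r x} -> induced_connected e S.
Proof.
move=> rS r_conn; apply/forallP => x; apply/implyP => xS.
apply/forallP => y; apply/implyP => yS; change (connect (induced S) x y).
by apply: (@connect_trans _ _ r); [rewrite induced_connect_sym|]; apply: r_conn.
Qed.

Lemma induced_connected_card_le1 S : #|S| <= 1 -> induced_connected e S.
Proof.
move/card_le1_eqP=> S1; apply/forallP => x; apply/implyP => xS.
by apply/forallP => y; apply/implyP => yS; rewrite (S1 y x yS xS) connect0.
Qed.

Lemma induced_connected_setT : connected_graph e -> induced_connected e setT.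
Proof.
move=> conn; apply/forallP => x; apply/implyP => _; apply/forallP => y; apply/implyP => _.
by rewrite (@eq_connect _ _ e) // => u v /=; rewrite !in_setT !andbT.
Qed.

Section Distance.
Variables (P : {set T}) (r : T).
Hypotheses (rP : r \in P) (P_conn : induced_connected e P).

Definition grow (X : {set T}) : {set T} := X :|: [set y in P | [exists x in X, e x y]].

Definition ball k := iter k grow [set r].

Lemma ball_sub k : ball k \subset P.
Proof.
elim: k => [|k IHk]; first by rewrite sub1set.
by rewrite /ball iterS subUset IHk; apply/subsetP => y; rewrite inE => /andP [].
Qed.

Lemma mem_ball_last k x p :
  x \in ball k -> path (induced P) x p -> last x p \in ball (k + size p).
Proof.
elim: p x k => [|z p IHp] x k /=; first by rewrite addn0.
move=> xk /andP [/and3P [exz _ zP] zp]; rewrite addnS -addSn; apply: IHp zp.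
by rewrite /ball iterS !inE zP; apply/orP; right; apply/existsP; exists x; rewrite xk.
Qed.

Lemma exists_ball x : exists k, (x \in ball k) || (x \notin P).
Proof.
case xP: (x \in P); last by exists 0; rewrite orbT.
have /connectP [p rp ->] := induced_connected_connect P_conn rP xP.
by exists (0 + size p); rewrite mem_ball_last // inE.
Qed.

(* The breadth-first distance from r inside P; it is 0 outside P. *)
Definition dist x := ex_minn (exists_ball x).

Lemma mem_ball_dist x : x \in P -> x \in ball (dist x).
Proof. by move=> xP; rewrite /dist; case: ex_minnP => k; rewrite xP orbF. Qed.

Lemma dist_min x k : x \in ball k -> dist x <= k.
Proof. by move=> xk; rewrite /dist; case: ex_minnP => m _; apply; rewrite xk. Qed.

Lemma dist_eq0 x : x \in P -> dist x = 0 -> x = r.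
Proof. by move=> xP /(congr1 ball) dx; move: (mem_ball_dist xP); rewrite dx inE => /eqP. Qed.

Lemma exists_dist_pred x :
  x \in P -> x != r -> exists y, [/\ y \in P, e y x & dist y < dist x].
Proof.
move=> xP xr; case dx: (dist x) => [|k]; first by rewrite (dist_eq0 xP dx) eqxx in xr.
move: (mem_ball_dist xP); rewrite dx /ball iterS !inE => /orP [xk|].
  by move: (dist_min xk); rewrite dx ltnn.
case/andP => _ /existsP [y /andP [yk eyx]]; exists y; split => //.
  exact: subsetP (ball_sub k) y yk.
by rewrite ltnS dist_min.
Qed.

Lemma dist_le1 x : x \in P -> dist x <= 1 -> (x == r) || e r x.
Proof.
move=> xP dx1; case: (eqVneq x r) => //= xr.
have [y [yP eyx dyx]] := exists_dist_pred xP xr.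
have dy0 : dist y = 0 by apply/eqP; rewrite -leqn0 -ltnS (leq_trans dyx dx1).
by rewrite -(dist_eq0 yP dy0).
Qed.

Lemma induced_connected_setD1_farthest b :
  r != b -> {in P, forall x, dist x <= dist b} -> induced_connected e (P :\ b).
Proof.
move=> rb b_far; apply: (@induced_connected_from _ r); first by rewrite !inE rb.
move=> x /setD1P [xb xP]; have [k] := ubnP (dist x).
elim: k x xb xP => // k IHk x xb xP; rewrite ltnS => dxk.
case: (eqVneq x r) => [->|xr]; first exact: connect0.
have [y [yP eyx dyx]] := exists_dist_pred xP xr.
have yb : y != b by apply: contraTneq dyx => ->; rewrite -leqNgt b_far.
apply: connect_trans (IHk y yb yP (leq_trans dyx dxk)) _.
by apply: connect1; rewrite /induced /= !inE eyx xb yb xP yP.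
Qed.

Lemma exists_non_cut_vertex : (exists2 w, w \in P & w != r) ->
  exists b, [/\ b \in P, b != r, induced_connected e (P :\ b) &
    (exists2 w, w \in P :\ r & ~~ e r w) -> ~~ e r b].
Proof.
move=> [w0 w0P w0r]; have [b bP b_far] := @arg_maxnP T r (mem P) dist rP.
have {}bP : b \in P := bP.
have br : b != r.
  apply: contraNneq w0r => br; apply/eqP/dist_eq0 => //; apply/eqP.
  by rewrite -leqn0 (leq_trans (b_far _ w0P)) // br dist_min // inE.
exists b; split => //; first by apply: induced_connected_setD1_farthest => //; rewrite eq_sym.
move=> [w /setD1P [wr wP] nrw]; apply/negP => erb.
have db1 : dist b <= 1.
  apply: dist_min; rewrite /ball /= !inE bP; apply/orP; right.
  by apply/existsP; exists r; rewrite inE eqxx.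
by move: (dist_le1 wP (leq_trans (b_far _ wP) db1)); rewrite (negbTE wr) (negbTE nrw).
Qed.

End Distance.

Lemma force_step_setT X b w :
  (forall x, x != b -> x \in X) -> e w b -> force_step e X = setT.
Proof.
move=> X_b ewb; apply/setP => x; rewrite /force_step !inE.
case xX: (x \in X) => //=; have xb : x == b by apply: contraFT xX => /X_b.
rewrite (eqP xb); apply/existsP; exists w.
rewrite X_b ?edge_neq // ewb; apply/forallP => y; apply/implyP => /andP [_].
by apply: contraNT => /X_b ->.
Qed.

Lemma force_step_id X :
  {in X, forall u, {in ~: X, forall w, e u w} \/ {in ~: X, forall w, ~~ e u w}} ->
  1 < #|~: X| -> force_step e X = X.
Proof.
move=> all_or_none /card_gt1P [y1 [y2 [y1X y2X y12]]].
apply/setP => w; rewrite /force_step !inE.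
case wX: (w \in X) => //=; apply/negbTE/existsPn => u.
apply/negP => /andP [uX /andP [euw /forallP u_forces]].
have wX' : w \in ~: X by rewrite inE wX.
case: (all_or_none u uX) => [u_all|u_none]; last by rewrite (negbTE (u_none w wX')) in euw.
have [y yX yw] : exists2 y, y \in ~: X & y != w.
  by case: (eqVneq y1 w) => [<-|]; [exists y2; rewrite // eq_sym | exists y1].
by move: (u_forces y); rewrite u_all //= -in_setC yX (negbTE yw).
Qed.

Lemma forcing_set_fixed X : forcing_set e X -> force_step e X = X -> X = setT.
Proof. by move=> /eqP <- fX; rewrite /Defs.closure iter_fix. Qed.

Lemma forcing_set_iter X m :
  m <= #|T| -> iter m (force_step e) X = setT -> forcing_set e X.
Proof.
move=> mT Xm; rewrite /forcing_set /Defs.closure -(subnK mT) iterD Xm iter_fix //.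
by rewrite /force_step setTU.
Qed.

Lemma forcing_setC1 b w : e w b -> forcing_set e [set~ b].
Proof.
move=> ewb; apply: (@forcing_set_iter _ 1); first by apply/card_gt0P; exists b.
by apply: (force_step_setT (b := b) (w := w)) => // x xb; rewrite !inE.
Qed.

Lemma forcing_setC2 a b u w : u != a -> u != b -> e u a -> ~~ e u b -> e w b ->
  forcing_set e (~: [set a; b]).
Proof.
move=> ua ub eua eub ewb; have ab : a != b by apply: contraNneq eub => <-.
apply: (@forcing_set_iter _ 2).
  by have := max_card [set a; b]; rewrite cards2 ab.
apply: (force_step_setT (b := b) (w := w)) => // x xb.
case: (eqVneq x a) => [->|xa]; last by rewrite !inE negb_or xa xb.
rewrite /force_step !inE eqxx /=; apply/existsP; exists u.
rewrite !inE negb_or ua ub eua; apply/forallP => y; apply/implyP.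
by rewrite !inE negbK => /andP [euy /orP [] // /eqP yb]; rewrite -yb euy in eub.
Qed.

Lemma Fc_le_card S : connected_forcing_set e S -> Fc e <= #|S|.
Proof. exact: (Order.TotalTheory.bigmin_le_cond (T := nat) #|T|). Qed.

Lemma leq_Fc k :
  k <= #|T| -> (forall S, connected_forcing_set e S -> k <= #|S|) -> k <= Fc e.
Proof. by move=> kT k_le; apply: (big_ind (leq k)) => // m1 m2; rewrite leq_min => -> ->. Qed.

Lemma complete_forcing_set_card S :
  is_complete e -> forcing_set e S -> #|T| - 1 <= #|S|.
Proof.
move=> complete fS; rewrite leqNgt; apply/negP => small.
have S_fixed : force_step e S = S.
  apply: force_step_id => [u uS|]; last by move: (cardsC S); lia.
  by left => w; rewrite inE => wS; apply: complete; apply: contraNneq wS => <-.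
by move: small; rewrite (forcing_set_fixed fS S_fixed) cardsT; lia.
Qed.

Section Star.
Variable c : T.
Hypothesis star : forall x y, e x y = (x != y) && ((x == c) || (y == c)).

Lemma star_force_step_center X :
  c \in X -> 1 < #|~: X| -> force_step e X = X.
Proof.
move=> cX; apply: force_step_id => u uX; case: (eqVneq u c) => [->|uc].
  by left => w; rewrite inE star eqxx andbT => wX; apply: contraNneq wX => <-.
by right => w; rewrite inE star (negbTE uc) /= => wX; apply: contraNN wX => /andP [_ /eqP ->].
Qed.

Lemma star_force_step_leaf x : x != c -> force_step e [set x] = [set x; c].
Proof.
move=> xc; apply/setP => z; rewrite /force_step !inE.
case: (eqVneq z x) => //= zx; apply/existsP/eqP => [[u]|->].
  by rewrite inE => /andP [/eqP -> /andP []]; rewrite star (negbTE xc) /= => /andP [_ /eqP].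
exists x; rewrite !inE eqxx star xc eqxx orbT /=; apply/forallP => y.
by rewrite star (negbTE xc) /=; apply/implyP => /andP [/andP [_ ->]].
Qed.

Lemma star_leaves_card_le1 S :
  c \notin S -> induced_connected e S -> #|S| <= 1.
Proof.
move=> cS S_conn; apply/card_le1_eqP => x y xS yS.
have /connectP [[|z p] /= xp ->] // := induced_connected_connect S_conn yS xS.
have [exz _ zS] := and3P (andP xp).1.
have yc : y != c by apply: contraNneq cS => <-.
have zc : z != c by apply: contraNneq cS => <-.
by move: exz; rewrite star (negbTE yc) (negbTE zc) andbF.
Qed.

Lemma star_forcing_set_card S :
  4 <= #|T| -> connected_forcing_set e S -> #|T| - 1 <= #|S|.
Proof.
move=> n4 /andP [fS S_conn]; rewrite leqNgt; apply/negP => small.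
have not_full X : 1 < #|~: X| -> X != setT.
  by apply: contraTneq => ->; rewrite setCT cards0.
case cS: (c \in S).
  have S2 : 1 < #|~: S| by move: (cardsC S); lia.
  by move: (not_full _ S2); rewrite (forcing_set_fixed fS (star_force_step_center cS S2)) eqxx.
have [S0|[x xS]] := set_0Vmem S.
  have S_fixed : force_step e S = S.
    by apply: force_step_id => [u|]; rewrite S0 ?inE // setC0 cardsT; lia.
  by move: small; rewrite (forcing_set_fixed fS S_fixed) cardsT; lia.
have xc : x != c by apply: contraNneq (negbT cS) => <-.
have Sx : S = [set x].
  apply/eqP; rewrite eq_sym eqEcard sub1set xS cards1.
  exact: star_leaves_card_le1 (negbT cS) S_conn.
have Y2 : 1 < #|~: [set x; c]| by move: (cardsC [set x; c]); rewrite cards2 xc; lia.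
move: fS (not_full _ Y2); rewrite /forcing_set /Defs.closure -(prednK (_ : 0 < #|T|)); last by lia.
rewrite iterSr Sx star_force_step_leaf // iter_fix ?star_force_step_center //.
  by move=> ->.
by rewrite !inE eqxx orbT.
Qed.

End Star.

Section Dominating.
Variable r : T.
Hypothesis dom : forall z, z != r -> e r z.

Lemma dominating_induced_connectedC2 a b :
  a != r -> b != r -> induced_connected e (~: [set a; b]).
Proof.
move=> ar br; have rab : r \in ~: [set a; b] by rewrite !inE negb_or !(eq_sym r) ar br.
apply: (@induced_connected_from _ r) => // z zab.
case: (eqVneq z r) => [->|zr]; first exact: connect0.
by apply: connect1; rewrite /induced /= dom // rab zab.
Qed.

Lemma dominating_edgeless_star :
  (forall p q, p != r -> q != r -> ~~ e p q) -> is_star e.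
Proof.
move=> edgeless; exists r => p q.
case: (eqVneq p r) => [->|pr].
  rewrite andbT; case: (eqVneq r q) => [<-|rq]; first by rewrite eirr.
  by rewrite dom // eq_sym.
case: (eqVneq q r) => [->|qr]; first by rewrite esym dom // orbT andbT.
by rewrite /= andbF; apply/negbTE/edgeless.
Qed.

End Dominating.

Section Connected.
Hypotheses (conn : connected_graph e) (n2 : 2 <= #|T|).

Lemma exists_neighbor x : exists y, e x y.
Proof.
have /card_gt0P [y] : 0 < #|[set~ x]| by rewrite cardsC1; lia.
rewrite !inE => yx; have /connectP [[|z p] /= xp yl] := conn x y.
  by rewrite yl eqxx in yx.
by case/andP: xp => exz _; exists z.
Qed.

Lemma Fc_le_card_pred : Fc e <= #|T| - 1.
Proof.
have /card_gt0P [r _] : 0 < #|T| by lia.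
have [w erw] := exists_neighbor r.
have [|b [_ _ Gb_conn _]] := exists_non_cut_vertex (in_setT r) (induced_connected_setT conn).
  by exists w; rewrite // eq_sym edge_neq.
have [w' ebw'] := exists_neighbor b.
rewrite subn1 -(cardsC1 b); apply: Fc_le_card; apply/andP; split.
  by apply: (@forcing_setC1 _ w'); rewrite esym.
by rewrite -setTD.
Qed.

Lemma Fc_le_card_sub2 a b u : u != a -> u != b -> e u a -> ~~ e u b ->
  induced_connected e (~: [set a; b]) -> Fc e <= #|T| - 2.
Proof.
move=> ua ub eua eub Gab_conn; have [w ebw] := exists_neighbor b.
have ab : a != b by apply: contraNneq eub => <-.
apply: leq_trans (@Fc_le_card (~: [set a; b]) _) _.
  by rewrite /connected_forcing_set Gab_conn (@forcing_setC2 a b u w) // esym.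
by move: (cardsC [set a; b]); rewrite cards2 ab; lia.
Qed.

Lemma dominating_Fc_le_card_sub2 r x y :
  (forall z, z != r -> e r z) -> x != y -> ~~ e x y ->
  (is_star e /\ 4 <= #|T|) \/ Fc e <= #|T| - 2.
Proof.
move=> dom xy nxy.
have xr : x != r by apply: contraNneq nxy => xr; rewrite xr dom // -xr eq_sym.
have yr : y != r by apply: contraNneq nxy => yr; rewrite yr esym dom // -yr.
have small a b u : a != r -> b != r -> u != a -> u != b -> e u a -> ~~ e u b ->
    Fc e <= #|T| - 2.
  move=> ar br ua ub eua eub.
  exact: Fc_le_card_sub2 ua ub eua eub (dominating_induced_connectedC2 dom ar br).
case: (pickP [pred v | (v != r) && (e x v || e y v)]) => [v /andP [vr /orP [exv|eyv]]|isolated].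
- by right; apply: (small v y x) => //; apply: edge_neq.
- right; apply: (small v x y) => //; first exact: edge_neq.
    by rewrite eq_sym.
  by rewrite esym.
case: (boolP [exists u, exists z, [&& u != r, z != r & e u z]]).
  case/existsP=> u /existsP [z /and3P [ur zr euz]]; right.
  have nux : ~~ e u x by move: (isolated u); rewrite /= ur esym => /norP [].
  apply: (small z x u) => //; first exact: edge_neq.
  by apply: contraTneq euz => ->; move: (isolated z); rewrite /= zr esym => /norP [].
move/existsPn=> no_edge; have [n4|n3] := leqP 4 #|T|.
  left; split => //; apply: (dominating_edgeless_star dom) => p q pr qr.
  by move/existsPn: (no_edge p) => /(_ q); rewrite pr qr.
right; apply: (@Fc_le_card_sub2 r y x) => //; first by rewrite esym dom.
by apply: induced_connected_card_le1; move: (cardsC [set r; y]); rewrite cards2 eq_sym yr; lia.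
Qed.

Lemma nondominating_Fc_le_card_sub2 :
  (forall r, exists2 w, w != r & ~~ e r w) -> Fc e <= #|T| - 2.
Proof.
move=> nondom; have /card_gt0P [r0 _] : 0 < #|T| by lia.
have [w0 ew0] := exists_neighbor r0.
have [|a [_ _ Ga_conn _]] := exists_non_cut_vertex (in_setT r0) (induced_connected_setT conn).
  by exists w0; rewrite // eq_sym edge_neq.
have [u eua] := exists_neighbor a.
have ua : u != a by rewrite eq_sym edge_neq.
have [w wu nuw] := nondom u.
have wa : w != a by apply: contraNneq nuw => ->; rewrite esym.
have uP : u \in setT :\ a by rewrite !inE ua.
have [|b [_ bu Gab_conn b_far]] := exists_non_cut_vertex uP Ga_conn.
  by exists w; rewrite // !inE wa.
have nub : ~~ e u b by apply: b_far; exists w; rewrite // !inE wu wa.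
have setC2E : [set: T] :\ a :\ b = ~: [set a; b].
  by apply/setP => x; rewrite !inE negb_or andbT andbC.
by apply: (Fc_le_card_sub2 ua _ _ nub); [rewrite eq_sym | rewrite esym | rewrite -setC2E].
Qed.

Lemma complete_or_star_or_Fc_le_card_sub2 :
  [\/ is_complete e, is_star e /\ 4 <= #|T| | Fc e <= #|T| - 2].
Proof.
case: (boolP [forall x, forall y, (x != y) ==> e x y]) => [/forallP complete|].
  by constructor 1 => x y xy; move/forallP: (complete x) => /(_ y); rewrite xy.
case/forallPn=> x /forallPn [y]; rewrite negb_imply => /andP [xy nxy].
case: (boolP [exists r, [forall z, (z != r) ==> e r z]]) => [/existsP [r /forallP dom]|nodom].
  have [star|small] := @dominating_Fc_le_card_sub2 r x y (fun z => implyP (dom z)) xy nxy.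
    by constructor 2.
  by constructor 3.
constructor 3; apply: nondominating_Fc_le_card_sub2 => r.
by move/existsPn: nodom => /(_ r) /forallPn [w]; rewrite negb_imply => /andP []; exists w.
Qed.

End Connected.
End Graph.

Theorem theorem1 (T : finType) (e : rel T) :
  simple_graph e -> connected_graph e -> 2 <= #|T| ->
  (Fc e = #|T| - 1 <-> (is_complete e \/ (is_star e /\ 4 <= #|T|))).
Proof.
move=> [esym eirr] conn n2; split => [Fc_eq|extremal].
  have [complete|star|small] := complete_or_star_or_Fc_le_card_sub2 esym eirr conn n2.
  - by left.
  - by right.
  - by move: small; rewrite Fc_eq; lia.
apply/eqP; rewrite eqn_leq Fc_le_card_pred //=.
apply: leq_Fc => [|S cfS]; first exact: leq_subr.
case: extremal => [complete|[[c star] n4]].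
  exact: (complete_forcing_set_card complete (andP cfS).1).
exact: (star_forcing_set_card star n4 cfS).
Qed.
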